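(* Let $a_1,\dots,a_\ell,c_1,\dots,c_s,m,b_1,\dots,b_t$ be integers $\ge 2$ with $a_\ell>2$ when $\ell\ge1$, where $\ell,s,t\ge 0$. For each integer $k\ge 0$ let $p=p(k)>q=q(k)>0$ be the coprime integers with $$\frac{p}{q}=\left[a_1,\dots,a_\ell,[2]^k,c_1,\dots,c_s,m+k,b_1,\dots,b_t\right],$$ and let $q^{-1}=q^{-1}(k)$ be the inverse of $q$ modulo $p$ with $0<q^{-1}<p$. Then there are constants $d_i,e_i,f_i$ ($i=1,2,3$), independent of $k$, with $d_1\neq 0$, such that for all $k\ge 0$: $p=d_1k^2+e_1k+f_1$, $q=d_2k^2+e_2k+f_2$, $q^{-1}=d_3k^2+e_3k+f_3$, and $$\frac{d_1}{d_2}=\begin{cases}[a_1,\dots,a_{\ell-1},a_\ell-1] & \ell\ge1,\\ 1 & \ell=0,\end{cases}\qquad \frac{d_1}{d_3}=\begin{cases}[b_t,\dots,b_1] & t\ge1,\\ \infty\ (\text{i.e. } d_3=0) & t=0.\end{cases}$$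
   Context: $[x_1,\dots,x_n]=x_1-1/(x_2-1/(\cdots-1/x_n))$ denotes the Hirzebruch–Jung continued fraction; $[2]^k$ denotes $k$ consecutive entries equal to $2$. *)

From mathcomp Require Import all_boot all_order all_algebra.
Set Implicit Arguments. Unset Strict Implicit. Unset Printing Implicit Defensive.
Import Order.TTheory GRing.Theory Num.Theory.
Local Open Scope ring_scope.

(* Hirzebruch--Jung continued fraction [x_1,...,x_n] = x_1 - 1/(x_2 - 1/(... - 1/x_n)).
   (The empty fraction is never used; it is set to 0.) *)
Fixpoint hj (s : seq rat) : rat :=
  match s with
  | [::] => 0
  | x :: s' => if s' is [::] then x else x - (hj s')^-1
  end.

Definition natQ (n : nat) : rat := n%:R.

Definition hjseq (a c b : seq nat) (m k : nat) : seq nat :=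
  a ++ nseq k 2%N ++ c ++ (m + k)%N :: b.

Definition pval (a c b : seq nat) (m k : nat) : int :=
  numq (hj (map natQ (hjseq a c b m k))).
Definition qval (a c b : seq nat) (m k : nat) : int :=
  denq (hj (map natQ (hjseq a c b m k))).

Definition inv_mod (p q : nat) : nat :=
  if [pick r : 'I_p | (0 < r)%N && ((q * r) %% p == 1 %% p)%N] is Some r
  then nat_of_ord r else 0%N.

Definition qinvval (a c b : seq nat) (m k : nat) : nat :=
  inv_mod `|pval a c b m k|%N `|qval a c b m k|%N.

From mathcomp Require Import all_boot all_order all_algebra.
From mathcomp Require Import ring zify.
Set Implicit Arguments. Unset Strict Implicit. Unset Printing Implicit Defensive.
Import Order.TTheory GRing.Theory Num.Theory.
Local Open Scope ring_scope.

(* [x_1,...,x_n] = p/q, where the product of the matrices [[x_i, -1], [1, 0]]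
   is [[p, -q'], [q, -r]]; its determinant 1 gives q q' = 1 + p r, so q' is the
   inverse of q modulo p.  With A, C, B the matrices of a, c, b, the block [2]^k
   contributes 1 + k u v^T with u = (1, 1), v = (1, -1), and the entry m + k
   contributes hj_mx m + k e_1 e_1^T, so every entry of
   A (1 + k u v^T) C (hj_mx m + k e_1 e_1^T) B is quadratic in k with leading
   coefficient (A u) (v^T C e_1) (e_1^T B).  Now A u is the first column of
   A [[1, 0], [1, 1]], the matrix of a with its last entry decreased by 1, and
   e_1^T B is, up to sign, the first column of the matrix of rev b. *)

Record mx2 := Mx2 { m11 : int; m12 : int; m21 : int; m22 : int }.

Definition mx2_mul (A B : mx2) : mx2 :=
  Mx2 (m11 A * m11 B + m12 A * m21 B) (m11 A * m12 B + m12 A * m22 B)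
      (m21 A * m11 B + m22 A * m21 B) (m21 A * m12 B + m22 A * m22 B).

Definition mx2_one : mx2 := Mx2 1 0 0 1.

Definition mx2_det (A : mx2) : int := m11 A * m22 A - m12 A * m21 A.

Lemma mx2_mulA A B C : mx2_mul A (mx2_mul B C) = mx2_mul (mx2_mul A B) C.
Proof. by case: A B C => ???? [????] [????]; rewrite /mx2_mul /=; congr Mx2; ring. Qed.

Lemma mx2_mul1l A : mx2_mul mx2_one A = A.
Proof. by case: A => ????; rewrite /mx2_mul /=; congr Mx2; ring. Qed.

Lemma mx2_mul1r A : mx2_mul A mx2_one = A.
Proof. by case: A => ????; rewrite /mx2_mul /=; congr Mx2; ring. Qed.

Lemma mx2_det_mul A B : mx2_det (mx2_mul A B) = mx2_det A * mx2_det B.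
Proof. by case: A B => ???? [????]; rewrite /mx2_det /mx2_mul /=; ring. Qed.

Definition hj_mx (x : int) : mx2 := Mx2 x (-1) 1 0.

Definition hj_prod (s : seq nat) : mx2 :=
  foldr (fun x P => mx2_mul (hj_mx x%:Z) P) mx2_one s.

Local Notation ge2 s := (all (fun x => 2 <= x)%N s).

Lemma hj_prod_cat s1 s2 : hj_prod (s1 ++ s2) = mx2_mul (hj_prod s1) (hj_prod s2).
Proof. by elim: s1 => [|x s IH] /=; rewrite ?mx2_mul1l // IH mx2_mulA. Qed.

Lemma hj_prod_rcons s x : hj_prod (rcons s x) = mx2_mul (hj_prod s) (hj_mx x%:Z).
Proof. by rewrite -cats1 hj_prod_cat /= mx2_mul1r. Qed.

Lemma hj_prod_det s : mx2_det (hj_prod s) = 1.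
Proof. by elim: s => [|x s IH] //=; rewrite mx2_det_mul IH /mx2_det /=; ring. Qed.

Lemma hj_prod_rev s :
  hj_prod (rev s) =
  Mx2 (m11 (hj_prod s)) (- m21 (hj_prod s)) (- m12 (hj_prod s)) (m22 (hj_prod s)).
Proof.
elim: s => [|x s IH]; first by rewrite /=; congr Mx2.
rewrite rev_cons hj_prod_rcons IH /=.
by case: (hj_prod s) => ????; rewrite /mx2_mul /=; congr Mx2; ring.
Qed.

Definition hj_chain2 (k : int) : mx2 := Mx2 (k + 1) (- k) k (1 - k).

Lemma hj_prod_nseq2 k : hj_prod (nseq k 2%N) = hj_chain2 k.
Proof.
elim: k => [|k IH] /=; first by congr Mx2.
by rewrite IH /mx2_mul /=; congr Mx2; lia.
Qed.

(* Prepending x >= 2 maps each column (u, v) of P diag(1, -1) and P (1, 1)^T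
   to (x u - v, u), which preserves both u > v >= -1 and u >= v > 0. *)
Lemma hj_prod_bounds s : ge2 s ->
  let P := hj_prod s in
  [/\ 0 <= m21 P < m11 P, -1 <= - m22 P < - m12 P
    & 0 < m21 P + m22 P <= m11 P + m12 P].
Proof.
elim: s => [|x s IH] /=; first by [].
move=> /andP[hx /IH]; case: (hj_prod s) => p p' q q' [/= h1 h2 h3].
have hx' : 2 <= x%:Z by lia.
by rewrite /mx2_mul /=; split; nia.
Qed.

Lemma hj_prod_nonempty_bounds s : ge2 s -> s != [::] ->
  0 < m21 (hj_prod s) /\ 0 <= - m22 (hj_prod s).
Proof.
case: s => [//|x s] /= /andP[_ hs] _; have := hj_prod_bounds hs.
by case: (hj_prod s) => ???? [/= h1 h2 h3]; rewrite /mx2_mul /=; lia.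
Qed.

Lemma hj_value s : ge2 s -> s != [::] ->
  hj (map natQ s) = (m11 (hj_prod s))%:~R / (m21 (hj_prod s))%:~R.
Proof.
elim: s => [|x s IH] // /andP[hx hs] _.
case: s IH hs => [|y s] IH hs.
  by rewrite /= /mx2_mul /= /natQ !mulr1 !mulr0 !addr0 pmulrn.
have -> : hj (map natQ [:: x, y & s]) = natQ x - (hj (map natQ (y :: s)))^-1 by [].
rewrite IH //; have [h1 _ _] := hj_prod_bounds (s := y :: s) hs.
have -> : hj_prod [:: x, y & s] = mx2_mul (hj_mx x) (hj_prod (y :: s)) by [].
move: (hj_prod (y :: s)) h1 => P h1.
have hP : (m11 P)%:~R != 0 :> rat by rewrite intr_eq0; lia.
rewrite /mx2_mul /= /natQ pmulrn invf_div !rmorphD !rmorphM /=.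
by field.
Qed.

Lemma hj_num_den s : ge2 s -> s != [::] ->
  numq (hj (map natQ s)) = m11 (hj_prod s) /\ denq (hj (map natQ s)) = m21 (hj_prod s).
Proof.
move=> hs hn; rewrite hj_value //.
have [hq _] := hj_prod_nonempty_bounds hs hn.
have := hj_prod_det s; move: (hj_prod s) hq => P hq hdet.
have cop : coprime `|m11 P| `|m21 P|.
  have : coprimez (m11 P) (m21 P).
    by apply/coprimezP; exists (m22 P, - m12 P) => /=; rewrite /mx2_det in hdet; lia.
  by rewrite /coprimez /gcdz.
rewrite coprimeq_num // coprimeq_den // gtr0_sg // mul1r.
by split => //; rewrite gt_eqF //; lia.
Qed.

Lemma inv_mod_eq (p q r w : nat) : (0 < r < p)%N -> (q * r = 1 + p * w)%N ->
  inv_mod p q = r.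
Proof.
move=> /andP[r_gt0 r_lt] qr; rewrite /inv_mod.
case: pickP => [r' /andP[_ /eqP qr'] | none]; last first.
  by have := none (Ordinal r_lt); rewrite /= r_gt0 qr addnC (mulnC p) modnMDl eqxx.
have e1 : (r' = r' * (q * r) %[mod p])%N.
  have -> : (r' * (q * r) = r' * w * p + r')%N by rewrite qr; ring.
  by rewrite modnMDl.
have e2 : (r' * (q * r) = r %[mod p])%N.
  by rewrite mulnA (mulnC r') -modnMml qr' modnMml mul1n.
by have := etrans e1 e2; rewrite !modn_small //; lia.
Qed.

Lemma hj_inv_mod s : ge2 s -> s != [::] ->
  inv_mod `|m11 (hj_prod s)| `|m21 (hj_prod s)| = `|- m12 (hj_prod s)|%N.
Proof.
move=> hs hn; have [h1 h2 h3] := hj_prod_bounds hs.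
have [h4 h5] := hj_prod_nonempty_bounds hs hn.
have := hj_prod_det s; rewrite /mx2_det.
move: (hj_prod s) h1 h2 h3 h4 h5 => P h1 h2 h3 h4 h5 hdet.
by apply: (@inv_mod_eq _ _ _ `|- m22 P|%N); lia.
Qed.

Lemma hj_decr_last a : ge2 a -> ((0 < size a)%N -> (2 < last 0%N a)%N) ->
  ((m11 (hj_prod a) + m12 (hj_prod a))%:~R / (m21 (hj_prod a) + m22 (hj_prod a))%:~R : rat)
  = match a with
    | [::] => 1
    | x :: s => hj (map natQ (rcons (belast x s) (last x s).-1))
    end.
Proof.
case: a => [|x s] ha hl; first by [].
have hy : (2 < last x s)%N by exact: hl.
have hW : ge2 (belast x s) by move: ha; rewrite lastI all_rcons => /andP[].
rewrite [RHS]/= hj_value; last by rewrite -size_eq0 size_rcons.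
  rewrite [x :: s]lastI !hj_prod_rcons predn_int; last by lia.
  by case: (hj_prod (belast x s)) => ????; rewrite /mx2_mul /=; congr (_%:~R / _%:~R); ring.
by rewrite all_rcons hW andbT; lia.
Qed.

Lemma hj_rev_value s : ge2 s -> s != [::] ->
  hj (map natQ (rev s)) = (m11 (hj_prod s))%:~R / (- m12 (hj_prod s))%:~R.
Proof.
move=> hs hn; rewrite hj_value ?all_rev ?hj_prod_rev //.
by rewrite -size_eq0 size_rev size_eq0.
Qed.

Definition hj_family (A C B : mx2) (m : nat) (k : int) : mx2 :=
  mx2_mul A (mx2_mul (hj_chain2 k) (mx2_mul C (mx2_mul (hj_mx (m%:Z + k)) B))).

Lemma hj_prod_hjseq a c b m k :
  hj_prod (hjseq a c b m k) = hj_family (hj_prod a) (hj_prod c) (hj_prod b) m k.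
Proof. by rewrite /hjseq !hj_prod_cat hj_prod_nseq2 /= PoszD. Qed.

Lemma hjseq_entries a c b m k : ge2 a -> ge2 c -> ge2 b -> (2 <= m)%N ->
  [/\ pval a c b m k = m11 (hj_prod (hjseq a c b m k)),
      qval a c b m k = m21 (hj_prod (hjseq a c b m k))
    & (qinvval a c b m k)%:Z = - m12 (hj_prod (hjseq a c b m k))].
Proof.
move=> ha hc hb hm.
have hs : ge2 (hjseq a c b m k).
  by rewrite /hjseq !all_cat ha hc /= hb all_nseq /= andbT; lia.
have hn : hjseq a c b m k != [::] by rewrite -size_eq0 /hjseq !size_cat /=; lia.
have [hp hq] := hj_num_den hs hn; have [_ h2 _] := hj_prod_bounds hs.
rewrite /qinvval /pval /qval hp hq hj_inv_mod //; split => //; lia.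
Qed.

Definition quadratic (d : int) (f : nat -> int) : Prop :=
  exists e c : int, forall k : nat, f k = d * k%:Z ^+ 2 + e * k%:Z + c.

Lemma quadratic_interpolation d f :
  (forall k : nat, f k = d * k%:Z ^+ 2 + (f 1%N - f 0%N - d) * k%:Z + f 0%N) ->
  quadratic d f.
Proof. by move=> hf; exists (f 1%N - f 0%N - d), (f 0%N). Qed.

Lemma quadratic_ratr d f : quadratic d f ->
  exists e c : rat, forall k : nat, (f k)%:~R = d%:~R * k%:R ^+ 2 + e * k%:R + c.
Proof.
case=> e [c hf]; exists e%:~R, c%:~R => k.
by rewrite hf !intrD !intrM.
Qed.

Lemma hj_family_quadratic A C B m :
  let P k := hj_family A C B m k%:Z in
  let w := m11 C - m21 C in
  [/\ quadratic ((m11 A + m12 A) * w * m11 B) (fun k => m11 (P k)),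
      quadratic ((m21 A + m22 A) * w * m11 B) (fun k => m21 (P k))
    & quadratic (- ((m11 A + m12 A) * w * m12 B)) (fun k => - m12 (P k))].
Proof.
by split; apply: quadratic_interpolation => k;
  case: A C B => ???? [????] [????]; rewrite /hj_family /mx2_mul /=; ring.
Qed.

Theorem lemma3p4 (a c b : seq nat) (m : nat)
  (ha : all (fun x => 2 <= x)%N a) (hc : all (fun x => 2 <= x)%N c)
  (hb : all (fun x => 2 <= x)%N b) (hm : (2 <= m)%N)
  (hal : (0 < size a)%N -> (2 < last 0%N a)%N) :
  exists d1 e1 f1 d2 e2 f2 d3 e3 f3 : rat,
    d1 != 0 /\
    (forall k : nat,
      (pval a c b m k)%:~R = d1 * (k%:R) ^+ 2 + e1 * k%:R + f1 /\
      (qval a c b m k)%:~R = d2 * (k%:R) ^+ 2 + e2 * k%:R + f2 /\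
      (qinvval a c b m k)%:R = d3 * (k%:R) ^+ 2 + e3 * k%:R + f3) /\
    d1 / d2 = (match a with
               | [::] => 1
               | x :: s => hj (map natQ (rcons (belast x s) (last x s).-1))
               end) /\
    (match b with
     | [::] => d3 = 0
     | _ :: _ => d1 / d3 = hj (map natQ (rev b))
     end).
Proof.
have [q11 q21 q12] := hj_family_quadratic (hj_prod a) (hj_prod c) (hj_prod b) m.
have [[e1 [f1 hp]] [e2 [f2 hq]] [e3 [f3 hr]]] :=
  And3 (quadratic_ratr q11) (quadratic_ratr q21) (quadratic_ratr q12).
set xA := m11 (hj_prod a) + m12 (hj_prod a) in hp hr.
set yA := m21 (hj_prod a) + m22 (hj_prod a) in hq.
set w := m11 (hj_prod c) - m21 (hj_prod c) in hp hq hr.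
exists (xA * w * m11 (hj_prod b))%:~R, e1, f1, (yA * w * m11 (hj_prod b))%:~R, e2, f2.
exists (- (xA * w * m12 (hj_prod b)))%:~R, e3, f3.
have [xA_gt0 yA_gt0 w_gt0] : [/\ 0 < xA, 0 < yA & 0 < w].
  have [_ _ hA] := hj_prod_bounds ha; have [hC _ _] := hj_prod_bounds hc.
  by rewrite /xA /yA /w; split; lia.
have [hB hB' _] := hj_prod_bounds hb.
split; first by rewrite intr_eq0 !mulf_eq0; lia.
split.
  move=> k; have [-> -> hqi] := hjseq_entries k ha hc hb hm.
  by rewrite -hp -hq pmulrn hqi -hr !hj_prod_hjseq.
split; first by rewrite -hj_decr_last // -/xA -/yA !intrM; field; rewrite !intr_eq0; lia.
case: b hb hB hB' {q11 q21 q12 hp hq hr} => [|y b] hb hB hB'; first by rewrite /= mulr0 oppr0.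
have [_ hB''] := hj_prod_nonempty_bounds hb isT.
by rewrite hj_rev_value // -mulrN !intrM; field; rewrite !intr_eq0; lia.
Qed.
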